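(* Let $(V,\rho)$ be a finite rank torsion free $\mathfrak{sl}(2)$-module. Then its Casimir operator $C_\rho$, regarded as a $\mathbb{C}$-linear endomorphism of $V$, has a minimal polynomial, and it coincides with the minimal polynomial of the Casimir operator $C_{\rho_{\mathrm{rat}}}$ of its rationalization $F_{\mathrm{rat}}(V,\rho)=(S^{-1}V,\rho_{\mathrm{rat}})$.
   Context: $\mathfrak{sl}(2)$ has basis $L_{-1}=f$, $L_0=-\tfrac12 h$, $L_1=-e$ for a Chevalley basis $e,f,h$ ($[e,f]=h$, $[h,e]=2e$, $[h,f]=-2f$). An $\mathfrak{sl}(2)$-module $(V,\rho)$ is a $\mathbb{C}[z]$-module via $z\cdot v=\rho(L_0)v$; it is torsion free if torsion free as a $\mathbb{C}[z]$-module and of finite rank if $S^{-1}V$ is finite-dimensional over $\mathbb{C}(z)$, $S=\mathbb{C}[z]\setminus\{0\}$. The Casimir operator is $C_\rho=\rho(L_0)(\rho(L_0)-1)-\rho(L_{-1})\rho(L_1)$. The rationalization is $(S^{-1}V,\rho_{\mathrm{rat}})$ with $\rho_{\mathrm{rat}}(L_{-1})(v/p(z))=\rho(L_{-1})(v)/p(z-1)$, $\rho_{\mathrm{rat}}(L_0)(v/p(z))=zv/p(z)$, $\rho_{\mathrm{rat}}(L_1)(v/p(z))=\rho(L_1)(v)/p(z+1)$. *)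

From HB Require Import structures.
From mathcomp Require Import all_boot all_order all_algebra.
From mathcomp Require Import complex.
From mathcomp Require Import reals.
Set Implicit Arguments. Unset Strict Implicit. Unset Printing Implicit Defensive.
Import Order.TTheory GRing.Theory Num.Theory.
Local Open Scope ring_scope.

Record sl2mod (R : realType) (V : lmodType R[i]) := Sl2mod {
  sl2_e : {linear V -> V};
  sl2_f : {linear V -> V};
  sl2_h : {linear V -> V};
  sl2_ef : forall v, sl2_e (sl2_f v) - sl2_f (sl2_e v) = sl2_h v;
  sl2_he : forall v, sl2_h (sl2_e v) - sl2_e (sl2_h v) = 2%:R *: sl2_e v;
  sl2_hf : forall v, sl2_h (sl2_f v) - sl2_f (sl2_h v) = - (2%:R *: sl2_f v)
}.

Section Sl2Defs.
Variable R : realType.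
Local Notation C := R[i].
Variable V : lmodType C.
Variable rho : sl2mod V.

Definition Lm1 (v : V) : V := sl2_f rho v.
Definition L0 (v : V) : V := - ((2%:R : C)^-1 *: sl2_h rho v).
Definition L1 (v : V) : V := - sl2_e rho v.

Definition peval (p : {poly C}) (T : V -> V) (v : V) : V :=
  \sum_(i < size p) p`_i *: iter i T v.

(* C[z]-module structure: z . v = rho(L_0) v *)
Definition zact (p : {poly C}) (v : V) : V := peval p L0 v.

Definition casimir (v : V) : V := L0 (L0 v) - L0 v - Lm1 (L1 v).

Definition torsion_free : Prop :=
  forall (p : {poly C}) (v : V), p != 0 -> zact p v = 0 -> v = 0.

(* ---- The localization S^{-1} V, S = C[z] \ {0}, as fractions v / p
   (pairs (v, p) with p != 0) modulo the usual equivalence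
   v/p = w/q  iff  s (q v - p w) = 0 for some s in S. ---- *)
Definition frac := (V * {poly C})%type.
Definition frac_ok (x : frac) : Prop := x.2 != 0.
Definition frac_eq (x y : frac) : Prop :=
  exists s : {poly C}, s != 0 /\ zact s (zact y.2 x.1 - zact x.2 y.1) = 0.

Definition frac0 : frac := (0, 1).
Definition frac_add (x y : frac) : frac :=
  (zact y.2 x.1 + zact x.2 y.1, x.2 * y.2).
Definition frac_opp (x : frac) : frac := (- x.1, x.2).
Definition frac_scale (c : C) (x : frac) : frac := (c *: x.1, x.2).
(* C(z)-scalar action by a/b (b != 0) *)
Definition frac_rscale (a b : {poly C}) (x : frac) : frac :=
  (zact a x.1, b * x.2).

Definition ratLm1 (x : frac) : frac := (Lm1 x.1, x.2 \Po ('X - 1)).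
Definition ratL0 (x : frac) : frac := (L0 x.1, x.2).
Definition ratL1 (x : frac) : frac := (L1 x.1, x.2 \Po ('X + 1)).

Definition rat_casimir (x : frac) : frac :=
  frac_add (frac_add (ratL0 (ratL0 x)) (frac_opp (ratL0 x)))
           (frac_opp (ratLm1 (ratL1 x))).

Definition frac_peval (p : {poly C}) (T : frac -> frac) (x : frac) : frac :=
  \big[frac_add/frac0]_(i < size p) frac_scale p`_i (iter i T x).

(* finite rank: S^{-1} V is finite dimensional over C(z), i.e. spanned over
   C(z) by finitely many fractions *)
Definition finite_rank : Prop :=
  exists (n : nat) (xs : 'I_n -> frac), (forall i, frac_ok (xs i)) /\
    forall x : frac, frac_ok x ->
      exists (a b : 'I_n -> {poly C}), (forall i, b i != 0) /\
        frac_eq x (\big[frac_add/frac0]_(i < n) frac_rscale (a i) (b i) (xs i)).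

Definition annihilates_casimir (p : {poly C}) : Prop :=
  forall v : V, peval p casimir v = 0.
Definition annihilates_rat_casimir (p : {poly C}) : Prop :=
  forall x : frac, frac_ok x -> frac_eq (frac_peval p rat_casimir x) frac0.

End Sl2Defs.

Definition is_minpoly (R : realType) (ann : {poly R[i]} -> Prop) (p : {poly R[i]}) : Prop :=
  p \is monic /\ ann p /\ forall q, ann q -> (p %| q)%R.

From Pilot Require Import Defs.
From HB Require Import structures.
From mathcomp Require Import all_boot all_order all_algebra.
From mathcomp Require Import complex.
From mathcomp Require Import reals.
From Stdlib Require Import Classical_Prop.
From mathcomp Require Import ring zify.
Set Implicit Arguments. Unset Strict Implicit. Unset Printing Implicit Defensive.
Import Order.TTheory GRing.Theory Num.Theory.
Local Open Scope ring_scope.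

(* The Casimir operator C commutes with L0, so V is a module over C[z][T], with z
   acting by L0 and T by C.  Finite rank makes the iterates C^k v dependent over
   C[z], and torsion freeness turns this into a nonzero Q(z, T) annihilating all
   of V.  Since L_{-1} L0 = (L0 - 1) L_{-1} and C - L0 (L0 - 1) = - L_{-1} L_1, the
   shift Q(z - 1, T) (T - z (z - 1)) again annihilates V, and symmetrically with
   L_1 and z + 1.  For an annihilator Q of least T-degree, whose leading
   coefficient has least z-degree, pseudo-division then shows that Q(z - 1, T)
   annihilates V as well, so that Q(z, T) - Q(z - 1, T) = 0 by minimality: Q has
   constant coefficients, i.e. C has a nonzero annihilating polynomial, hence a
   minimal polynomial.  Finally a polynomial kills C iff it kills the Casimir
   operator of the rationalization, since the latter maps v / q to C(v) / q. *)

Lemma big_ord_pad (W : nmodType) (F : nat -> W) n m : (n <= m)%N ->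
  (forall i, (n <= i)%N -> F i = 0) -> \sum_(i < m) F i = \sum_(i < n) F i.
Proof.
move=> le_nm F0; rewrite -(subnKC le_nm) big_split_ord /=.
by rewrite [X in _ + X]big1 ?addr0 // => i _; rewrite F0 ?leq_addr.
Qed.

Section ActEval.
Variables (A : comNzRingType) (W : zmodType) (act : A -> W -> W) (T : W -> W).
Hypotheses (actDl : forall a b w, act (a + b) w = act a w + act b w)
  (actDr : forall a, {morph act a : u w / u + w})
  (actM : forall a b w, act (a * b) w = act a (act b w))
  (TD : {morph T : u w / u + w})
  (T_act : forall a w, T (act a w) = act a (T w)).

Definition aeval (p : {poly A}) (w : W) : W :=
  \sum_(i < size p) act p`_i (iter i T w).

Lemma morph_add0 (S : W -> W) : {morph S : u w / u + w} -> S 0 = 0.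
Proof. by move=> SD; apply: (@addrI _ (S 0)); rewrite -SD !addr0. Qed.

Lemma act0 w : act 0 w = 0.
Proof. by apply: (@addrI _ (act 0 w)); rewrite -actDl !addr0. Qed.

Lemma aeval0 w : aeval 0 w = 0.
Proof. by rewrite /aeval size_poly0 big_ord0. Qed.

Lemma aeval_pad (p : {poly A}) w m : (size p <= m)%N ->
  aeval p w = \sum_(i < m) act p`_i (iter i T w).
Proof.
move=> le_pm; rewrite (big_ord_pad (F := fun i => act p`_i (iter i T w)) le_pm) //.
by move=> i le_pi; rewrite nth_default ?act0.
Qed.

Lemma aeval_comm (S : W -> W) (p : {poly A}) w : {morph S : u v / u + v} ->
  (forall a u, S (act a u) = act a (S u)) -> (forall u, S (T u) = T (S u)) ->
  S (aeval p w) = aeval p (S w).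
Proof.
move=> SD S_act ST; rewrite /aeval (big_morph S SD (morph_add0 SD)).
apply: eq_bigr => i _; rewrite S_act; congr (act _ _).
by elim: (val i) => //= k IHk; rewrite ST IHk.
Qed.

Lemma aevalDr (p : {poly A}) : {morph aeval p : u w / u + w}.
Proof.
move=> u w; rewrite /aeval -big_split; apply: eq_bigr => i _ /=.
by rewrite -actDr; congr (act _ _); elim: (val i) => //= k ->; rewrite TD.
Qed.

Lemma aeval_act (p : {poly A}) a w : aeval p (act a w) = act a (aeval p w).
Proof.
by rewrite (aeval_comm _ _ (actDr a)) // => b u; rewrite -!actM mulrC.
Qed.

Lemma aevalD (p q : {poly A}) w : aeval (p + q) w = aeval p w + aeval q w.
Proof.
pose m := maxn (size p) (size q).
rewrite (@aeval_pad (p + q) w m) ?(leq_trans (size_polyD _ _)) //.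
rewrite (@aeval_pad p w m) ?leq_maxl // (@aeval_pad q w m) ?leq_maxr //.
by rewrite -big_split /=; apply: eq_bigr => i _; rewrite coefD actDl.
Qed.

Lemma aevalC a w : aeval a%:P w = act a w.
Proof. by rewrite (@aeval_pad _ _ 1) ?size_polyC ?leq_b1 // big_ord1 coefC. Qed.

Lemma aevalMX (p : {poly A}) w : aeval (p * 'X) w = aeval p (T w).
Proof.
rewrite (@aeval_pad _ _ (size p).+1); last first.
  by rewrite (leq_trans (size_polyMleq _ _)) // size_polyX addn2.
rewrite big_ord_recl coefMX act0 add0r; apply: eq_bigr => i _.
by rewrite coefMX /= -iterSr.
Qed.

Lemma aevalMC (p : {poly A}) a w : aeval (p * a%:P) w = aeval p (act a w).
Proof.
rewrite aeval_act mulrC mul_polyC (@aeval_pad _ _ (size p)) ?size_scale_leq //.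
rewrite /aeval (big_morph _ (actDr a) (morph_add0 (actDr a))).
by apply: eq_bigr => i _; rewrite coefZ actM.
Qed.

Lemma aevalM (p q : {poly A}) w : aeval (p * q) w = aeval p (aeval q w).
Proof.
elim/poly_ind: q w => [|q a IHq] w.
  by rewrite mulr0 aeval0 (morph_add0 (aevalDr p)).
by rewrite mulrDr mulrA !aevalD aevalMX IHq aevalMX aevalDr !aevalC aevalMC.
Qed.

End ActEval.

Section PolyShift.
Variable F : numFieldType.
Implicit Types p : {poly F}.

Lemma comp_shift_downK p : (p \Po ('X - 1)) \Po ('X + 1) = p.
Proof. by rewrite -comp_polyA comp_polyB comp_polyX comp_polyC addrK comp_polyXr. Qed.

Lemma comp_shift_upK p : (p \Po ('X + 1)) \Po ('X - 1) = p.
Proof. by rewrite -comp_polyA comp_polyD comp_polyX comp_polyC subrK comp_polyXr. Qed.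

Lemma comp_shift_up_eq0 p : (p \Po ('X + 1) == 0) = (p == 0).
Proof.
apply/eqP/eqP => [p0|->]; last exact: comp_poly0.
by rewrite -[p]comp_shift_upK p0 comp_poly0.
Qed.

Lemma size_comp_shift p : size (p \Po ('X - 1)) = size p.
Proof. by rewrite size_comp_poly2 // -polyC1 size_XsubC. Qed.

Lemma size_sub_comp_shift p : p != 0 -> (size (p - (p \Po ('X - 1)))%R < size p)%N.
Proof.
move=> p0; rewrite (polySpred p0) ltnS; apply/leq_sizeP => j le_pj.
have lead_shift : lead_coef (p \Po ('X - 1)) = lead_coef p.
  by rewrite lead_coef_comp -polyC1 ?size_XsubC // lead_coefXsubC expr1n mulr1.
rewrite coefB; case: (ltngtP j (size p).-1) => [|lt_pj|->].
- by rewrite ltnNge le_pj.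
- by rewrite !nth_default ?subrr // ?size_comp_shift (polySpred p0).
- by rewrite -[in X in X - _]lead_coefE -(size_comp_shift p) -lead_coefE lead_shift subrr.
Qed.

Lemma comp_shift_fixed p : p \Po ('X - 1) = p -> (size p <= 1)%N.
Proof.
move=> p_fixed; have p_nat k : p.[k%:R] = p.[0].
  elim: k => // k IHk.
  by rewrite -IHk -[in LHS]p_fixed horner_comp !hornerE mulrSr addrK.
have -> : p = (p.[0])%:P.
  apply/eqP; rewrite -subr_eq0; apply/negPn/negP => q0.
  pose rs := [seq (i%:R : F) | i <- iota 0 (size (p - (p.[0])%:P))].
  have rs_roots : all (root (p - (p.[0])%:P)) rs.
    by apply/allP => x /mapP [i _ ->]; rewrite rootE !hornerE p_nat subrr.
  have rs_uniq : uniq rs.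
    by rewrite map_inj_uniq ?iota_uniq // => i j /eqP; rewrite eqr_nat => /eqP.
  by have := max_poly_roots q0 rs_roots rs_uniq; rewrite size_map size_iota ltnn.
by rewrite size_polyC leq_b1.
Qed.

Definition zdown (Q : {poly {poly F}}) := map_poly (comp_poly ('X - 1)) Q.
Definition zup (Q : {poly {poly F}}) := map_poly (comp_poly ('X + 1)) Q.

Lemma zupK (Q : {poly {poly F}}) : zdown (zup Q) = Q.
Proof. by apply/polyP => i; rewrite !coef_map /= comp_shift_upK. Qed.

Lemma size_zdown (Q : {poly {poly F}}) : size (zdown Q) = size Q.
Proof.
apply: size_map_inj_poly; last by rewrite comp_poly0.
by move=> p q /(congr1 (comp_poly ('X + 1))); rewrite /= !comp_shift_downK.
Qed.

Lemma size_zup (Q : {poly {poly F}}) : size (zup Q) = size Q.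
Proof.
apply: size_map_inj_poly; last by rewrite comp_poly0.
by move=> p q /(congr1 (comp_poly ('X - 1))); rewrite /= !comp_shift_upK.
Qed.

Lemma zdownM (P Q : {poly {poly F}}) : zdown (P * Q) = zdown P * zdown Q.
Proof. exact: rmorphM. Qed.

Lemma zdown_zup_factor (c b : {poly F}) (Q : {poly {poly F}}) :
  zdown (c%:P * (zup Q * ('X - b%:P))) =
  (c \Po ('X - 1))%:P * (Q * ('X - (b \Po ('X - 1))%:P)).
Proof. by rewrite !zdownM /zdown map_polyC rmorphB /= map_polyX map_polyC -/(zdown _) zupK. Qed.

End PolyShift.

Section LinearEval.
Variables (R : realType) (V : lmodType R[i]).
Implicit Types (p q : {poly R[i]}) (S T : {linear V -> V}).

Let scale_eval p T v : peval p T v = aeval *:%R T p v := erefl.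
Let scaleDl (a b : R[i]) (w : V) : (a + b) *: w = a *: w + b *: w.
Proof. exact: scalerDl. Qed.
Let scaleDr (a : R[i]) : {morph *:%R a : u w / u + w : V}.
Proof. exact: scalerDr. Qed.
Let scaleM (a b : R[i]) (w : V) : (a * b) *: w = a *: (b *: w).
Proof. exact/esym/scalerA. Qed.

Lemma pevalD p q T v : peval (p + q) T v = peval p T v + peval q T v.
Proof. exact: (aevalD _ scaleDl). Qed.

Lemma pevalM p q T v : peval (p * q) T v = peval p T (peval q T v).
Proof. by apply: (aevalM scaleDl scaleDr scaleM) => [u w|a w]; rewrite ?linearD ?linearZ. Qed.

Lemma pevalC a T v : peval a%:P T v = a *: v.
Proof. exact: (aevalC _ scaleDl). Qed.

Lemma pevalX T v : peval 'X T v = T v.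
Proof. by rewrite -['X]mul1r scale_eval (aevalMX _ scaleDl) -scale_eval pevalC scale1r. Qed.

Lemma peval_comm S T p v : (forall u, S (T u) = T (S u)) ->
  S (peval p T v) = peval p T (S v).
Proof. by move=> ST; apply: aeval_comm => // [u w|a u]; rewrite ?linearD ?linearZ. Qed.

Lemma peval_is_linear p T : linear (peval p T).
Proof.
move=> a u w; rewrite scale_eval (aevalDr scaleDr) ?(aeval_act scaleDr scaleM) //.
- by move=> b x; rewrite linearZ.
- by move=> x y; rewrite linearD.
Qed.

HB.instance Definition _ p T :=
  GRing.isLinear.Build R[i] V V *:%R (peval p T) (peval_is_linear p T).

End LinearEval.

Section Sl2Module.
Variables (R : realType) (V : lmodType R[i]) (rho : sl2mod V).
Local Notation e := (sl2_e rho).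
Local Notation f := (sl2_f rho).
Local Notation h := (sl2_h rho).
Local Notation L0 := (L0 rho).
Local Notation L1 := (L1 rho).
Local Notation Lm1 := (Lm1 rho).
Local Notation cas := (casimir rho).

Lemma L0_is_linear : linear L0.
Proof. by move=> a u v; rewrite /L0 linearP scalerDr opprD scalerA mulrC -scalerA scalerN. Qed.
HB.instance Definition _ := GRing.isLinear.Build R[i] V V *:%R L0 L0_is_linear.

Lemma L1_is_linear : linear L1.
Proof. by move=> a u v; rewrite /L1 linearP opprD scalerN. Qed.
HB.instance Definition _ := GRing.isLinear.Build R[i] V V *:%R L1 L1_is_linear.

Lemma Lm1_is_linear : linear Lm1.
Proof. by move=> a u v; rewrite /Lm1 linearP. Qed.
HB.instance Definition _ := GRing.isLinear.Build R[i] V V *:%R Lm1 Lm1_is_linear.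

Lemma sl2_hfE v : h (f v) = f (h v) - 2%:R *: f v.
Proof. by apply/eqP; rewrite -subr_eq0 opprD opprK addrA (sl2_hf rho) addNr. Qed.
Lemma sl2_heE v : h (e v) = e (h v) + 2%:R *: e v.
Proof. by apply/eqP; rewrite -subr_eq0 opprD addrA (sl2_he rho) subrr. Qed.
Lemma sl2_efE v : e (f v) = f (e v) + h v.
Proof. by apply/eqP; rewrite -subr_eq0 opprD addrA (sl2_ef rho) subrr. Qed.

Lemma half_twice : (2%:R : R[i])^-1 * 2%:R = 1.
Proof. by rewrite mulVf ?pnatr_eq0. Qed.

Lemma Lm1_L0 v : Lm1 (L0 v) = L0 (Lm1 v) - Lm1 v.
Proof.
rewrite /Defs.Lm1 /Defs.L0 linearN linearZ /= sl2_hfE scalerBr scalerA half_twice.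
by rewrite scale1r opprB addrC addrA addNr add0r.
Qed.

Lemma L1_L0 v : L1 (L0 v) = L0 (L1 v) + L1 v.
Proof.
rewrite /Defs.L1 /Defs.L0 !linearN linearZ /= sl2_heE !opprK scalerDr scalerA.
by rewrite half_twice scale1r addrK.
Qed.

Lemma L1_Lm1 v : L1 (Lm1 v) = Lm1 (L1 v) + 2%:R *: L0 v.
Proof.
rewrite /Defs.L1 /Defs.L0 /Defs.Lm1 linearN sl2_efE scalerN scalerA mulrC half_twice.
by rewrite scale1r opprD.
Qed.

Lemma casimirE v : cas v = L0 (L0 v) + L0 v - L1 (Lm1 v).
Proof.
rewrite /casimir L1_Lm1 scaler_nat mulr2n !opprD !addrA.
by rewrite (addrAC (L0 (L0 v) + L0 v)) addrK addrAC.
Qed.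

Lemma casimir_is_linear : linear cas.
Proof.
move=> a u w; rewrite /casimir !linearP /=.
by rewrite (addrACA (a *: _)) (addrACA (a *: _ + _)) -!scalerDr.
Qed.
HB.instance Definition _ := GRing.isLinear.Build R[i] V V *:%R cas casimir_is_linear.

Lemma casimir_L0 v : cas (L0 v) = L0 (cas v).
Proof. by rewrite /casimir L1_L0 [Lm1 (_ + _)]linearD /= Lm1_L0 subrK !linearB. Qed.
Lemma casimir_Lm1 v : cas (Lm1 v) = Lm1 (cas v).
Proof.
rewrite [in RHS]casimirE [Lm1 (_ - _)]linearB /= [Lm1 (_ + _)]linearD /=.
by rewrite Lm1_L0 subrK Lm1_L0 [L0 (_ - _)]linearB.
Qed.
Lemma casimir_L1 v : cas (L1 v) = L1 (cas v).
Proof.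
rewrite casimirE /casimir [L1 (_ - _)]linearB /= [L1 (_ - _)]linearB /=.
rewrite L1_L0 addrK L1_L0.
by rewrite [L0 (_ + _)]linearD /=.
Qed.

End Sl2Module.

Section CasimirOverZ.
Variables (R : realType) (V : lmodType R[i]) (rho : sl2mod V).
Local Notation C := R[i].
Local Notation L0 := (L0 rho).
Local Notation L1 := (L1 rho).
Local Notation Lm1 := (Lm1 rho).
Local Notation cas := (casimir rho).
Local Notation zact := (zact rho).
Implicit Types (p q : {poly C}) (P Q S : {poly {poly C}}) (u v w : V).

HB.instance Definition _ p := GRing.Linear.copy (zact p) (peval p L0).

Lemma zactD p q v : zact (p + q) v = zact p v + zact q v.
Proof. exact: pevalD. Qed.

Lemma zactM p q v : zact (p * q) v = zact p (zact q v).
Proof. exact: pevalM. Qed.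

Lemma zactC a v : zact a%:P v = a *: v.
Proof. exact: pevalC. Qed.

Lemma zactN p v : zact (- p) v = - zact p v.
Proof. by apply/eqP; rewrite -addr_eq0 -zactD addNr -polyC0 zactC scale0r. Qed.

Lemma zactX v : zact 'X v = L0 v.
Proof. exact: pevalX. Qed.

Lemma zactXaddC a v : zact ('X + a%:P) v = L0 v + a *: v.
Proof. by rewrite zactD zactX zactC. Qed.

Lemma zact_shift_down v : zact ('X - 1) v = L0 v - v.
Proof. by rewrite -polyC1 -polyCN zactXaddC scaleN1r. Qed.

Lemma zact_shift_up v : zact ('X + 1) v = L0 v + v.
Proof. by rewrite -polyC1 zactXaddC scale1r. Qed.

Lemma casimir_zact p v : cas (zact p v) = zact p (cas v).
Proof. exact/peval_comm/casimir_L0. Qed.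

Lemma L0_zact p v : L0 (zact p v) = zact p (L0 v).
Proof. exact: peval_comm. Qed.

Lemma Lm1_zact p v : Lm1 (zact p v) = zact (p \Po ('X - 1)) (Lm1 v).
Proof.
elim/poly_ind: p v => [|p a IHp] v.
  by rewrite comp_poly0 -polyC0 !zactC !scale0r linear0.
rewrite zactD zactM zactX zactC linearD linearZ /= IHp Lm1_L0.
by rewrite comp_polyD comp_polyM comp_polyX comp_polyC zactD zactM zactC zact_shift_down.
Qed.

Lemma L1_zact p v : L1 (zact p v) = zact (p \Po ('X + 1)) (L1 v).
Proof.
elim/poly_ind: p v => [|p a IHp] v.
  by rewrite comp_poly0 -polyC0 !zactC !scale0r linear0.
rewrite zactD zactM zactX zactC linearD linearZ /= IHp L1_L0.
by rewrite comp_polyD comp_polyM comp_polyX comp_polyC zactD zactM zactC zact_shift_up.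
Qed.

Lemma zact1 v : zact 1 v = v.
Proof. by rewrite -polyC1 zactC scale1r. Qed.

Lemma zact0 v : zact 0 v = 0.
Proof. by rewrite -polyC0 zactC scale0r. Qed.

Lemma zact_suml I (r : seq I) (P : pred I) (F : I -> {poly C}) v :
  zact (\sum_(i <- r | P i) F i) v = \sum_(i <- r | P i) zact (F i) v.
Proof. by elim/big_rec2: _ => [|i a b _ <-]; rewrite ?zact0 ?zactD. Qed.

Definition cas_eval Q : V -> V := aeval zact cas Q.

Let zactDr p : {morph zact p : u w / u + w}.
Proof. exact: linearD. Qed.

Lemma cas_evalD P Q v : cas_eval (P + Q) v = cas_eval P v + cas_eval Q v.
Proof. exact: (aevalD _ zactD). Qed.

Lemma cas_evalM P Q v : cas_eval (P * Q) v = cas_eval P (cas_eval Q v).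
Proof.
apply: (aevalM zactD zactDr zactM) => [u w|a w]; last exact: casimir_zact.
exact: linearD.
Qed.

Lemma cas_evalC p v : cas_eval p%:P v = zact p v.
Proof. exact: (aevalC _ zactD). Qed.

Lemma cas_evalX v : cas_eval 'X v = cas v.
Proof. by rewrite -['X]mul1r /cas_eval (aevalMX _ zactD) -/(cas_eval _ _) cas_evalC zact1. Qed.

Lemma cas_eval_is_linear Q : linear (cas_eval Q).
Proof.
move=> a u w; rewrite /cas_eval (aevalDr zactDr) ?(aeval_comm (S := *:%R a)) //.
- exact: scalerDr.
- by move=> p x; rewrite linearZ.
- by move=> x; rewrite linearZ.
- exact: linearD.
Qed.

HB.instance Definition _ Q :=
  GRing.isLinear.Build C V V *:%R (cas_eval Q) (cas_eval_is_linear Q).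

Lemma peval_casimir p v : peval p cas v = cas_eval p^:P v.
Proof.
rewrite /cas_eval /aeval size_map_polyC; apply: eq_bigr => i _.
by rewrite coef_map zactC.
Qed.

Lemma cas_eval_zdown Q v : cas_eval (zdown Q) (Lm1 v) = Lm1 (cas_eval Q v).
Proof.
rewrite /cas_eval /aeval size_zdown linear_sum; apply: eq_bigr => i _ /=.
by rewrite coef_map Lm1_zact; congr (zact _ _); elim: (val i) => //= k ->; rewrite casimir_Lm1.
Qed.

Lemma cas_eval_zup Q v : cas_eval (zup Q) (L1 v) = L1 (cas_eval Q v).
Proof.
rewrite /cas_eval /aeval size_zup linear_sum; apply: eq_bigr => i _ /=.
by rewrite coef_map L1_zact; congr (zact _ _); elim: (val i) => //= k ->; rewrite casimir_L1.
Qed.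

Lemma cas_eval_zact Q p v : cas_eval Q (zact p v) = zact p (cas_eval Q v).
Proof.
apply: aeval_act => [q x y|q r x|q x]; [exact: linearD | exact: zactM | exact: casimir_zact].
Qed.

Lemma cas_eval_poly m (y : nat -> {poly C}) v :
  cas_eval (\poly_(k < m) y k) v = \sum_(k < m) zact (y k) (iter k cas v).
Proof.
rewrite /cas_eval (aeval_pad _ zactD _ (size_poly m y)).
by apply: eq_bigr => k _; rewrite coef_poly ltn_ord.
Qed.

Definition cas_ann Q := forall v, cas_eval Q v = 0.

Lemma cas_annMl S Q : cas_ann Q -> cas_ann (S * Q).
Proof. by move=> annQ v; rewrite cas_evalM annQ linear0. Qed.

Lemma cas_annB P Q : cas_ann P -> cas_ann Q -> cas_ann (P - Q).
Proof. by move=> annP annQ v; rewrite -mulN1r cas_evalD cas_evalM annP annQ linear0 addr0. Qed.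

Lemma cas_ann_zdown Q : cas_ann Q -> cas_ann (zdown Q * ('X - ('X * ('X - 1))%:P)).
Proof.
move=> annQ v; rewrite cas_evalM cas_evalD cas_evalX -polyCN cas_evalC zactN.
rewrite zactM zact_shift_down zactX.
have -> : cas v - L0 (L0 v - v) = - Lm1 (L1 v).
  by rewrite linearB /casimir /= (addrAC (_ - _)) subrr add0r.
by rewrite linearN /= cas_eval_zdown annQ !linear0.
Qed.

Lemma cas_ann_zup Q : cas_ann Q -> cas_ann (zup Q * ('X - ('X * ('X + 1))%:P)).
Proof.
move=> annQ v; rewrite cas_evalM cas_evalD cas_evalX -polyCN cas_evalC zactN.
rewrite zactM zact_shift_up zactX.
have -> : cas v - L0 (L0 v + v) = - L1 (Lm1 v).
  by rewrite linearD casimirE /= (addrAC (_ + _)) subrr add0r.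
by rewrite linearN /= cas_eval_zup annQ !linear0.
Qed.

Lemma cas_ann_mulCK a Q : torsion_free rho -> a != 0 -> cas_ann (a%:P * Q) -> cas_ann Q.
Proof. by move=> tf a0 annaQ v; apply: (tf _ _ a0); rewrite -cas_evalC -cas_evalM annaQ. Qed.

End CasimirOverZ.

Lemma size1_of_size_mul (D : idomainType) (p q : {poly D}) :
  p != 0 -> q != 0 -> size (p * q) = size q -> size p = 1%N.
Proof.
move=> p0 q0; rewrite size_mul //.
by move: (size_poly_gt0 p) (size_poly_gt0 q); rewrite p0 q0; lia.
Qed.

Section MinimalAnnihilator.
Variables (R : realType) (V : lmodType R[i]) (rho : sl2mod V).
Hypothesis tf : torsion_free rho.
Local Notation C := R[i].
Local Notation cas_ann := (cas_ann rho).
Implicit Types (P S : {poly {poly C}}).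

Variable Q : {poly {poly C}}.
Hypotheses (Q_neq0 : Q != 0) (Q_ann : cas_ann Q)
  (Q_min : forall P, P != 0 -> cas_ann P -> (size Q <= size P)%N).

Lemma cas_ann_small P : cas_ann P -> (size P < size Q)%N -> P = 0.
Proof.
move=> annP ltPQ; apply/eqP; apply: contraTT ltPQ => P0.
by rewrite -leqNgt Q_min.
Qed.

Lemma cas_ann_pdiv P : cas_ann P -> exists2 c, c != 0 & exists S, c%:P * P = S * Q.
Proof.
move=> annP; exists (lead_coef Q ^+ scalp P Q); first by rewrite expf_neq0 ?lead_coef_eq0.
exists (P %/ Q); have := Pdiv.Idomain.divp_eq P Q; set c := _ ^+ _ => divPQ.
have annR : cas_ann (P %% Q).
  have -> : P %% Q = c%:P * P - P %/ Q * Q by rewrite mul_polyC divPQ addrAC subrr add0r.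
  by apply: cas_annB; apply: cas_annMl.
by rewrite mul_polyC divPQ (cas_ann_small annR) ?addr0 ?ltn_modp.
Qed.

Lemma cas_ann_of_mulC c P S : c != 0 -> c%:P * P = S * Q -> cas_ann P.
Proof. by move=> c0 cPQ; apply: (cas_ann_mulCK tf c0); rewrite cPQ; apply: cas_annMl. Qed.

(* Cancelling [Q * zdown Q] in the product of the pseudo-divisions of the two
   shifted annihilators gives [c (T - a)^2 = S1 * zdown S2]; evaluating at
   [T = a], the factor [T - a] divides [S1] or [zdown S2], and either way some
   nonzero [c' * zdown Q] is a multiple of [Q]. *)
Lemma cas_ann_zdown_min : cas_ann (zdown Q).
Proof.
pose a : {poly C} := 'X * ('X - 1); pose D := 'X - a%:P.
have D0 : D != 0 by rewrite -size_poly_eq0 size_XsubC.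
have zQ0 : zdown Q != 0 by rewrite -size_poly_eq0 size_zdown size_poly_eq0.
have [c1 c1_0 [S1 e1]] := cas_ann_pdiv (cas_ann_zdown Q_ann).
have [c2 c2_0 [S2 e2]] := cas_ann_pdiv (cas_ann_zup Q_ann).
set c2' := c2 \Po ('X - 1).
have c2'_0 : c2' != 0 by rewrite -size_poly_eq0 size_comp_shift size_poly_eq0.
have e2' : c2'%:P * (Q * D) = zdown S2 * zdown Q.
  have := congr1 (@zdown C) e2; rewrite zdown_zup_factor zdownM.
  by rewrite comp_polyM comp_polyD comp_polyX comp_polyC subrK (mulrC ('X - 1)) => <-.
have key : (c1 * c2')%:P * (D * D) = S1 * zdown S2.
  apply: (mulIf (mulf_neq0 Q_neq0 zQ0)).
  transitivity ((c1%:P * (zdown Q * D)) * (c2'%:P * (Q * D))); first by rewrite polyCM; ring.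
  by rewrite e1 e2'; ring.
have := congr1 (horner^~ a) key; rewrite /= !hornerM hornerC /D hornerXsubC subrr !mulr0.
move/esym/eqP; rewrite mulf_eq0 => /orP [/factor_theorem [S1' eS1]|/factor_theorem [S2' eS2]].
  by apply: (cas_ann_of_mulC c1_0 (S := S1')); apply: (mulIf D0); rewrite -mulrA e1 eS1 mulrAC.
have e : c2'%:P * Q = S2' * zdown Q by apply: (mulIf D0); rewrite -mulrA e2' eS2 mulrAC.
have S2'0 : S2' != 0.
  apply/eqP => S2'_0; move/eqP: e; rewrite S2'_0 mul0r mulf_eq0 polyC_eq0.
  by rewrite (negPf c2'_0) (negPf Q_neq0).
have /eqP/size_poly1P [s s0 S2'E] : size S2' = 1%N.
  by apply: (size1_of_size_mul S2'0 zQ0); rewrite -e size_Cmul // size_zdown.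
by apply: (cas_ann_of_mulC s0 (S := c2'%:P)); rewrite -S2'E e.
Qed.

Hypothesis Q_lead_min : forall P, P != 0 -> cas_ann P -> size P = size Q ->
  (size (lead_coef Q) <= size (lead_coef P))%N.

Local Notation dQ := (Q - zdown Q).
Let d := size Q.
Let l := lead_coef Q.
Let d_gt0 : (0 < d)%N. Proof. by rewrite size_poly_gt0. Qed.

Let coef_diff i : dQ`_i = Q`_i - (Q`_i \Po ('X - 1)).
Proof. by rewrite coefB coef_map. Qed.

Let coef_diff_top : dQ`_d.-1 = l - (l \Po ('X - 1)).
Proof. by rewrite coef_diff /l lead_coefE. Qed.

Let size_diff : (size dQ <= d)%N.
Proof. by rewrite (leq_trans (size_polyD _ _)) // size_polyN size_zdown maxnn. Qed.

Let diff_ann : cas_ann dQ.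
Proof. exact: cas_annB Q_ann cas_ann_zdown_min. Qed.

Lemma lead_coef_min_const : (size l <= 1)%N.
Proof.
rewrite leqNgt; apply/negP => l_gt1.
have l0 : l != 0 by rewrite lead_coef_eq0.
have top0 : l - (l \Po ('X - 1)) != 0.
  by rewrite subr_eq0; apply: contraTneq l_gt1 => /esym/comp_shift_fixed; rewrite leqNgt.
have size_d : size dQ = d.
  apply/eqP; rewrite eqn_leq size_diff -(prednK d_gt0) ltnNge; apply: contra top0.
  by move=> /leq_sizeP/(_ _ (leqnn _)); rewrite coef_diff_top => ->.
have diff0 : dQ != 0 by rewrite -size_poly_eq0 size_d -lt0n.
have lead_dQ : lead_coef dQ = l - (l \Po ('X - 1)).
  by rewrite lead_coefE size_d coef_diff_top.
by have := Q_lead_min diff0 diff_ann size_d; rewrite lead_dQ leqNgt size_sub_comp_shift.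
Qed.

Lemma zdown_min_fixed : zdown Q = Q.
Proof.
apply/esym/eqP; rewrite -subr_eq0; apply/eqP/cas_ann_small => //.
rewrite -/d -(prednK d_gt0) ltnS; apply/leq_sizeP => j.
rewrite leq_eqVlt => /predU1P [<-|lt_dj].
  by rewrite coef_diff_top (size1_polyC lead_coef_min_const) comp_polyC subrr.
by rewrite nth_default // (leq_trans size_diff) // -(prednK d_gt0).
Qed.

Lemma min_cas_ann_const : Q = (\poly_(i < size Q) (Q`_i)`_0)^:P.
Proof.
apply/polyP => i; rewrite coef_map coef_poly /=.
case: ltnP => [_|le_Qi]; last by rewrite nth_default.
apply: size1_polyC; apply: comp_shift_fixed.
by rewrite -[in RHS]zdown_min_fixed coef_map.
Qed.

End MinimalAnnihilator.

Lemma ex_minn_classic (P : nat -> Prop) :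
  (exists n, P n) -> exists n, P n /\ forall m, P m -> (n <= m)%N.
Proof.
move=> [n Pn]; elim/ltn_ind: n Pn => n IHn Pn.
have [[m [lt_mn Pm]]|no_lt] := classic (exists m, (m < n)%N /\ P m).
  exact: IHn lt_mn Pm.
exists n; split=> // m Pm; rewrite leqNgt; apply/negP => lt_mn.
by apply: no_lt; exists m.
Qed.

Lemma casimir_ann_exists (R : realType) (V : lmodType R[i]) (rho : sl2mod V) :
  torsion_free rho -> (exists Q, Q != 0 /\ cas_ann rho Q) ->
  exists p : {poly R[i]}, p != 0 /\ annihilates_casimir rho p.
Proof.
move=> tf [Q0 [Q0_neq0 Q0_ann]].
have [d [[Q1 [Q1_neq0 [Q1_ann sizeQ1]]] d_min]] :=
  ex_minn_classic (ex_intro (fun d => exists Q, Q != 0 /\ cas_ann rho Q /\ size Q = d)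
    _ (ex_intro _ Q0 (conj Q0_neq0 (conj Q0_ann erefl)))).
have [k [[Q [Q_neq0 [Q_ann [sizeQ leadQ]]]] k_min]] :=
  ex_minn_classic (ex_intro (fun k => exists Q, Q != 0 /\ cas_ann rho Q /\
    size Q = d /\ size (lead_coef Q) = k) _
    (ex_intro _ Q1 (conj Q1_neq0 (conj Q1_ann (conj sizeQ1 erefl))))).
have Q_min P : P != 0 -> cas_ann rho P -> (size Q <= size P)%N.
  by move=> P0 annP; rewrite sizeQ; apply: d_min; exists P.
have Q_lead_min P : P != 0 -> cas_ann rho P -> size P = size Q ->
    (size (lead_coef Q) <= size (lead_coef P))%N.
  by move=> P0 annP sizeP; rewrite leadQ; apply: k_min; exists P; rewrite -sizeQ.
exists (\poly_(i < size Q) (Q`_i)`_0); split.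
  by rewrite -map_polyC_eq0 -(min_cas_ann_const tf Q_neq0 Q_ann Q_min Q_lead_min).
move=> v; rewrite peval_casimir.
by rewrite -(min_cas_ann_const tf Q_neq0 Q_ann Q_min Q_lead_min).
Qed.

Lemma mx_wide_left_kernel (F : fieldType) m n (M : 'M[F]_(m, n)) :
  (n < m)%N -> exists2 y : 'rV_m, y *m M = 0 & y != 0.
Proof.
move=> lt_nm; have : ~~ row_free M.
  by rewrite -row_leq_rank -ltnNge (leq_ltn_trans (rank_leq_col M)).
by rewrite -kermx_eq0 => /rowV0Pn [y /sub_kermxP yM y0]; exists y.
Qed.

Section FractionDenominators.
Local Open Scope quotient_scope.
Variable A : idomainType.

Lemma tofrac_num_den (x : {fraction A}) :
  exists2 ab : A * A, ab.2 != 0 & x * tofrac ab.2 = tofrac ab.1.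
Proof.
elim/quotW: x => r; exists ((frac r).1, (frac r).2); first exact: denom_ratioP.
unlock tofrac; rewrite !piE; apply/eqmodP; rewrite /= FracField.equivfE /FracField.mulf.
by rewrite !numden_Ratio ?mulf_neq0 ?oner_neq0 ?denom_ratioP // !mulr1 mulrC.
Qed.

Lemma tofrac_clear_denoms n (y : 'rV[{fraction A}]_n) :
  exists2 d : A, d != 0 & exists a : 'rV[A]_n, map_mx (@tofrac A) a = tofrac d *: y.
Proof.
have [nd nd0 ndP] := fin_all_exists2 (fun j => tofrac_num_den (y 0 j)).
exists (\prod_j (nd j).2); first exact/prodf_neq0.
exists (\row_j ((nd j).1 * \prod_(k | k != j) (nd k).2)); apply/rowP => j.
by rewrite !mxE [in RHS](bigD1 j) //= !rmorphM mulrAC [_ * y 0 j]mulrC ndP.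
Qed.

Lemma idomain_wide_left_kernel m n (M : 'M[A]_(m, n)) :
  (n < m)%N -> exists2 a : 'rV_m, a *m M = 0 & a != 0.
Proof.
move=> /(mx_wide_left_kernel (map_mx (@tofrac A) M)) [y yM y0].
have [d d0 [a aE]] := tofrac_clear_denoms y.
exists a.
  have aM : map_mx (@tofrac A) (a *m M) = 0 by rewrite map_mxM aE -scalemxAl yM scaler0.
  apply/rowP => i; have := congr1 (fun B : 'M_(1, n) => B 0 i) aM.
  by rewrite !mxE => /eqP; rewrite tofrac_eq0 => /eqP.
apply: contraNneq y0 => a0; move: aE; rewrite a0 map_mx0 => /esym/eqP.
by rewrite scaler_eq0 tofrac_eq0 (negPf d0).
Qed.

End FractionDenominators.

Section FiniteRank.
Variables (R : realType) (V : lmodType R[i]) (rho : sl2mod V).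
Hypothesis tf : torsion_free rho.
Local Notation C := R[i].
Local Notation zact := (zact rho).
Local Notation cas := (casimir rho).

Lemma frac_sum_num n (x : 'I_n -> Defs.frac V) : (forall i, (x i).2 != 0) ->
  exists c : nat -> {poly C},
    (\big[frac_add rho/frac0 V]_(i < n) x i).2 != 0 /\
    (\big[frac_add rho/frac0 V]_(i < n) x i).1 = \sum_(i < n) zact (c i) (x i).1.
Proof.
elim: n x => [|n IHn] x x_ok; first by exists (fun=> 0); rewrite !big_ord0 /= oner_eq0.
have [c [c0 cE]] := IHn (fun i => x (lift ord0 i)) (fun i => x_ok _).
set s := \big[_/_]_(i < n) _ in c0 cE.
exists (fun i => if i == 0%N then s.2 else (x ord0).2 * c i.-1).
rewrite !big_ord_recl /= -/s; split; first exact: mulf_neq0.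
by rewrite cE linear_sum; congr (_ + _); apply: eq_bigr => i _; rewrite zactM.
Qed.

Definition zgenerates n (w : 'I_n -> V) := forall u,
  exists2 D, D != 0 & exists c : 'I_n -> {poly C}, zact D u = \sum_i zact (c i) (w i).

Lemma finite_rank_zgenerates : finite_rank rho -> exists n (w : 'I_n -> V), zgenerates w.
Proof.
case=> n [xs [xs_ok xs_span]]; exists n, (fun i => (xs i).1) => u.
have [a [b [b0 uE]]] := xs_span (u, 1) (oner_neq0 _).
have [c [s0 sE]] := frac_sum_num (x := fun i => frac_rscale rho (a i) (b i) (xs i))
  (fun i => mulf_neq0 (b0 i) (xs_ok i)).
set s := \big[_/_]_(i < n) _ in s0 sE uE.
exists s.2 => //; exists (fun i : 'I_n => c i * a i).
case: uE => t [t0]; rewrite /= zact1 => /(tf t0) /eqP; rewrite subr_eq0 => /eqP ->.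
by rewrite sE; apply: eq_bigr => i _; rewrite zactM.
Qed.

Lemma zact_dependent n (w : 'I_n -> V) (u : 'I_n.+1 -> V) : zgenerates w ->
  exists2 y : 'I_n.+1 -> {poly C}, (exists j, y j != 0) & \sum_j zact (y j) (u j) = 0.
Proof.
move=> wgen; have [Dc Dc0 DcE] := fin_all_exists2 (fun j => wgen (u j)).
have [c cE] := fin_all_exists DcE.
have [a aM a0] := idomain_wide_left_kernel (\matrix_(j, i) c j i) (ltnSn n).
exists (fun j => a 0 j * Dc j).
  by have /rV0Pn [j aj0] := a0; exists j; rewrite mulf_neq0.
under eq_bigr => j _ do rewrite zactM cE linear_sum.
rewrite exchange_big /=; apply: big1 => i _.
under eq_bigr => j _ do rewrite -zactM.
have aMi : \sum_j a 0 j * c j i = 0.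
  by have := congr1 (fun B : 'rV_n => B 0 i) aM; rewrite !mxE; under eq_bigr do rewrite mxE.
by rewrite -zact_suml aMi zact0.
Qed.

Lemma cas_ann_exists : finite_rank rho -> exists Q, Q != 0 /\ cas_ann rho Q.
Proof.
move=> /finite_rank_zgenerates [n [w wgen]].
have ann_at v : exists2 P, P != 0 & cas_eval rho P v = 0.
  have [y [j yj] ysum] := zact_dependent (fun j : 'I_n.+1 => iter j cas v) wgen.
  exists (\poly_(k < n.+1) y (inord k)).
    apply/eqP => /(congr1 (fun P : {poly {poly C}} => P`_j))/eqP.
    by rewrite coef_poly ltn_ord inord_val coef0 (negPf yj).
  by rewrite cas_eval_poly -[RHS]ysum; apply: eq_bigr => k _; rewrite inord_val.
have [P P0 Pw] := fin_all_exists2 (fun i => ann_at (w i)).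
exists (\prod_i P i); split; first exact/prodf_neq0.
move=> u; have [D D0 [c uE]] := wgen u.
apply: (tf D0); rewrite -cas_eval_zact uE linear_sum /= big1 // => i _.
by rewrite cas_eval_zact (bigD1 i) //= mulrC cas_evalM Pw linear0 linear0.
Qed.

End FiniteRank.

Section Rationalization.
Variables (R : realType) (V : lmodType R[i]) (rho : sl2mod V).
Local Notation C := R[i].
Local Notation zact := (zact rho).
Local Notation cas := (casimir rho).
Implicit Types (x : Defs.frac V) (u : V) (p q : {poly C}).

(* [frac_repr x u q] says that the fraction [x] equals [u / q] in [S^-1 V]. *)
Definition frac_repr x u q := x.2 != 0 /\ zact q x.1 = zact x.2 u.

Lemma zact_comm p q u : zact p (zact q u) = zact q (zact p u).
Proof. by rewrite -!zactM mulrC. Qed.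

Lemma frac_repr0 q : frac_repr (frac0 V) 0 q.
Proof. by split; rewrite /= ?oner_eq0 // !linear0. Qed.

Lemma frac_repr_add x1 x2 u1 u2 q : frac_repr x1 u1 q -> frac_repr x2 u2 q ->
  frac_repr (frac_add rho x1 x2) (u1 + u2) q.
Proof.
case=> [x1_0 x1E] [x2_0 x2E]; split; first by rewrite /= mulf_neq0.
by rewrite /= !linearD /= !(zact_comm q) x1E x2E !zactM (zact_comm x2.2).
Qed.

Lemma frac_repr_scale a x u q : frac_repr x u q -> frac_repr (frac_scale a x) (a *: u) q.
Proof. by case=> x0 xE; split=> //=; rewrite !linearZ /= xE. Qed.

Lemma frac_repr_opp x u q : frac_repr x u q -> frac_repr (frac_opp x) (- u) q.
Proof. by case=> x0 xE; split=> //=; rewrite !linearN /= xE. Qed.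

Lemma frac_repr_L0 x u q : frac_repr x u q -> frac_repr (ratL0 rho x) (L0 rho u) q.
Proof. by case=> x0 xE; split=> //=; rewrite -!L0_zact xE. Qed.

Lemma frac_repr_L1 x u q :
  frac_repr x u q -> frac_repr (ratL1 rho x) (L1 rho u) (q \Po ('X + 1)).
Proof. by case=> x0 xE; split=> /=; rewrite ?comp_shift_up_eq0 // -!L1_zact xE. Qed.

Lemma frac_repr_Lm1 x u q :
  frac_repr x u q -> frac_repr (ratLm1 rho x) (Lm1 rho u) (q \Po ('X - 1)).
Proof.
case=> x0 xE; split=> /=; last by rewrite -!Lm1_zact xE.
by rewrite -size_poly_eq0 size_comp_shift size_poly_eq0.
Qed.

Lemma frac_repr_casimir x u q : frac_repr x u q -> frac_repr (rat_casimir rho x) (cas u) q.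
Proof.
move=> xu; apply: frac_repr_add; first apply: frac_repr_add.
- by do 2!apply: frac_repr_L0.
- by apply/frac_repr_opp/frac_repr_L0.
- by apply: frac_repr_opp; rewrite -[q]comp_shift_upK; apply/frac_repr_Lm1/frac_repr_L1.
Qed.

Lemma frac_repr_peval p x u q : frac_repr x u q ->
  frac_repr (frac_peval rho p (rat_casimir rho) x) (peval p cas u) q.
Proof.
move=> xu; rewrite /frac_peval /peval.
elim/big_rec2: _ => [|i y1 y2 _ IH]; first exact: frac_repr0.
apply: frac_repr_add IH; apply: frac_repr_scale.
by elim: (val i) => //= k; apply: frac_repr_casimir.
Qed.

Hypothesis tf : torsion_free rho.

Lemma frac_eq0 x : frac_eq rho x (frac0 V) <-> x.1 = 0.
Proof.
split=> [[s [s0]]|x0]; first by rewrite /= zact1 linear0 subr0; apply: tf.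
by exists 1; rewrite oner_eq0 /= x0 !linear0 addr0 linear0.
Qed.

Lemma annihilates_rat_casimirE p :
  annihilates_rat_casimir rho p <-> annihilates_casimir rho p.
Proof.
split=> [ann v|ann x x0].
  have v1 : frac_repr (v, 1) v 1 by split; rewrite ?oner_neq0.
  have [n0 pv] := frac_repr_peval p v1.
  have /frac_eq0 num0 := ann (v, 1) (oner_neq0 _).
  by apply: (tf n0); rewrite -pv num0 linear0.
have xx : frac_repr x x.1 x.2 by [].
apply/frac_eq0; have [_ pv] := frac_repr_peval p xx.
by apply: (tf x0); rewrite pv ann linear0.
Qed.

End Rationalization.

Lemma poly_ideal_monic_generator (F : fieldType) (I : {poly F} -> Prop) :
  (forall p q, I p -> I q -> I (p - q)) -> (forall p q, I q -> I (p * q)) ->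
  forall P, P != 0 -> I P ->
  exists p, p \is monic /\ I p /\ forall q, I q -> (p %| q)%R.
Proof.
move=> IB IM P P0 IP.
have [n [[p1 [p1_0 [Ip1 size_p1]]] n_min]] :=
  ex_minn_classic (ex_intro (fun n => exists p, p != 0 /\ I p /\ size p = n)
    _ (ex_intro _ P (conj P0 (conj IP erefl)))).
have lc0 : lead_coef p1 != 0 by rewrite lead_coef_eq0.
pose p := (lead_coef p1)^-1 *: p1.
have Ip : I p by rewrite /p -mul_polyC; apply: IM.
have p0 : p != 0 by rewrite scaler_eq0 invr_eq0 negb_or lc0.
exists p; split; first by rewrite monicE lead_coefZ mulVf.
split=> // q Iq; apply/modp_eq0P/eqP; apply: contraT => r0.
have Ir : I (q %% p).
  have -> : q %% p = q - q %/ p * p by rewrite {2}(divp_eq q p) addrAC subrr add0r.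
  by apply: IB => //; apply: IM.
have := n_min _ (ex_intro _ _ (conj r0 (conj Ir erefl))).
by rewrite -size_p1 -(size_scale p1 (invr_neq0 lc0)) leqNgt ltn_modp p0.
Qed.

Section CasimirAnnihilators.
Variables (R : realType) (V : lmodType R[i]) (rho : sl2mod V).

Lemma annihilates_casimirB p q : annihilates_casimir rho p -> annihilates_casimir rho q ->
  annihilates_casimir rho (p - q).
Proof.
move=> annp annq v; rewrite pevalD -[- q]scaleN1r -mul_polyC pevalM pevalC.
by rewrite annp annq scaler0 addr0.
Qed.

Lemma annihilates_casimirMl p q : annihilates_casimir rho q -> annihilates_casimir rho (p * q).
Proof. by move=> annq v; rewrite pevalM annq linear0. Qed.

End CasimirAnnihilators.

Theorem theorem7p1 (R : realType) (V : lmodType R[i]) (rho : sl2mod V) :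
  torsion_free rho -> finite_rank rho ->
  exists p : {poly R[i]},
    is_minpoly (annihilates_casimir rho) p /\
    is_minpoly (annihilates_rat_casimir rho) p.
Proof.
move=> tf rank_fin.
have [P [P0 annP]] := casimir_ann_exists tf (cas_ann_exists tf rank_fin).
have [p [p_monic [annp p_dvd]]] := poly_ideal_monic_generator
  (@annihilates_casimirB _ _ rho) (@annihilates_casimirMl _ _ rho) P0 annP.
exists p; split; first by [].
split=> //; split=> [|q /(annihilates_rat_casimirE tf)]; last exact: p_dvd.
exact/(annihilates_rat_casimirE tf).
Qed.
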